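(* Let $\tau^+\colon\underline{\mathscr{C}}\to\underline{\mathscr{C}}^+$ be a left adjoint of the inclusion functor $\underline{\mathscr{C}}^+\hookrightarrow\underline{\mathscr{C}}$. For $C\in\mathscr{C}$, let $Z_C$ be obtained as follows: choose a distinguished triangle $V\to U\overset{a}{\to}C\to V[1]$ with $U\in\mathcal{U},V\in\mathcal{V}$; choose a distinguished triangle $T[-1]\to S[-1]\overset{b}{\to}U\to T$ with $S\in\mathcal{S},T\in\mathcal{T}$; and choose a distinguished triangle $S[-1]\overset{a\circ b}{\to}C\overset{z_C}{\to}Z_C\to S$. Then the following are equivalent: (1) $\tau^+(C)=0$; (2) $Z_C\in\mathcal{W}$; (3) $C\in\mathcal{U}$.
   Context: $\mathscr{C}$ is a triangulated category with shift $[1]$; subcategories are full, additive, closed under isomorphisms and direct summands. $\mathrm{Ext}^1(X,Y)=\mathscr{C}(X,Y[1])$. $\mathcal{M}\ast\mathcal{N}$ is the full subcategory of objects $C$ admitting a distinguished triangle $M\to C\to N\to M[1]$ with $M\in\mathcal{M}$, $N\in\mathcal{N}$. A cotorsion pair $(\mathcal{U},\mathcal{V})$: $\mathrm{Ext}^1(\mathcal{U},\mathcal{V})=0$ and $\mathscr{C}=\mathcal{U}\ast\mathcal{V}[1]$. Fix a twin cotorsion pair, i.e. cotorsion pairs $(\mathcal{S},\mathcal{T}),(\mathcal{U},\mathcal{V})$ with $\mathrm{Ext}^1(\mathcal{S},\mathcal{V})=0$. Put $\mathcal{W}=\mathcal{T}\cap\mathcal{U}$, $\mathscr{C}^+=\mathcal{W}\ast\mathcal{V}[1]$.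 $\underline{\mathscr{C}}$ and $\underline{\mathscr{C}}^+$ are the ideal quotients of $\mathscr{C}$ and $\mathscr{C}^+$ by morphisms factoring through objects of $\mathcal{W}$ (such a left adjoint $\tau^+$ exists). *)

From HB Require Import structures.
From mathcomp Require Import all_boot all_algebra.
Set Implicit Arguments. Unset Strict Implicit. Unset Printing Implicit Defensive.
Import GRing.Theory.
Local Open Scope ring_scope.

(** * Preadditive categories: Hom-sets are abelian groups, composition is
    bilinear.  [mcomp g f] is "g after f". *)
Record PreAdd := PreAddMk {
  obj : Type;
  mor : obj -> obj -> zmodType;
  idm : forall X, mor X X;
  mcomp : forall X Y Z, mor Y Z -> mor X Y -> mor X Z;
  compA : forall X Y Z W (h : mor Z W) (g : mor Y Z) (f : mor X Y),
      mcomp h (mcomp g f) = mcomp (mcomp h g) f;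
  mcomp1m : forall X Y (f : mor X Y), mcomp (idm Y) f = f;
  mcompm1 : forall X Y (f : mor X Y), mcomp f (idm X) = f;
  compDl : forall X Y Z (g1 g2 : mor Y Z) (f : mor X Y),
      mcomp (g1 + g2) f = mcomp g1 f + mcomp g2 f;
  compDr : forall X Y Z (g : mor Y Z) (f1 f2 : mor X Y),
      mcomp g (f1 + f2) = mcomp g f1 + mcomp g f2
}.
Arguments obj : clear implicits.
Arguments mor {p} X Y.
Arguments idm {p} X.
Arguments mcomp {p X Y Z} g f.

Section Basic.
Variable C : PreAdd.

Definition is_iso (X Y : obj C) (f : mor X Y) : Prop :=
  exists g : mor Y X, mcomp g f = idm X /\ mcomp f g = idm Y.

Definition isomorphic (X Y : obj C) : Prop := exists f : mor X Y, is_iso f.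

Definition is_zero_obj (Z : obj C) : Prop := idm Z = 0.

Definition is_biproduct (X Y P : obj C) (i1 : mor X P) (i2 : mor Y P)
    (p1 : mor P X) (p2 : mor P Y) : Prop :=
  [/\ mcomp p1 i1 = idm X, mcomp p2 i2 = idm Y, mcomp p2 i1 = 0, mcomp p1 i2 = 0
    & mcomp i1 p1 + mcomp i2 p2 = idm P].

Definition additive_cat : Prop :=
  (exists Z, is_zero_obj Z) /\
  (forall X Y, exists P (i1 : mor X P) (i2 : mor Y P) (p1 : mor P X) (p2 : mor P Y),
      is_biproduct i1 i2 p1 p2).

Definition subcat (P : obj C -> Prop) : Prop :=
  [/\ forall X Y, isomorphic X Y -> P X -> P Y,
      exists Z, is_zero_obj Z /\ P Z,
      forall X Y B (i1 : mor X B) (i2 : mor Y B) (p1 : mor B X) (p2 : mor B Y),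
        is_biproduct i1 i2 p1 p2 -> P X -> P Y -> P B
    & forall X Y B (i1 : mor X B) (i2 : mor Y B) (p1 : mor B X) (p2 : mor B Y),
        is_biproduct i1 i2 p1 p2 -> P B -> P X].

Definition factors_through (W : obj C -> Prop) (X Y : obj C) (f : mor X Y) : Prop :=
  exists M, W M /\ exists (u : mor X M) (v : mor M Y), f = mcomp v u.

(** Equality of morphisms in the ideal quotient by [W]. *)
Definition quot_eq (W : obj C -> Prop) (X Y : obj C) (f g : mor X Y) : Prop :=
  factors_through W (f - g).

End Basic.

Record TriData (C : PreAdd) := TriDataMk {
  sh : obj C -> obj C;
  shm : forall X Y : obj C, mor X Y -> mor (sh X) (sh Y);
  dist : forall X Y Z : obj C, mor X Y -> mor Y Z -> mor Z (sh X) -> Prop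
}.
Arguments sh {C} t X.
Arguments shm {C} t {X Y} f.
Arguments dist {C} t {X Y Z} f g h.

Record triangulated (C : PreAdd) (D : TriData C) : Prop := {
  shm_id : forall X, shm D (idm X) = idm (sh D X);
  shm_comp : forall X Y Z (g : mor Y Z) (f : mor X Y),
      shm D (mcomp g f) = mcomp (shm D g) (shm D f);
  shm_add : forall X Y (f g : mor X Y), shm D (f + g) = shm D f + shm D g;
  shm_bij : forall X Y : obj C, bijective (@shm C D X Y);
  sh_esurj : forall Y : obj C, exists X, isomorphic (sh D X) Y;
  dist_iso : forall X Y Z X' Y' Z' (f : mor X Y) (g : mor Y Z) (h : mor Z (sh D X))
      (f' : mor X' Y') (g' : mor Y' Z') (h' : mor Z' (sh D X'))
      (u : mor X X') (v : mor Y Y') (w : mor Z Z'),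
      is_iso u -> is_iso v -> is_iso w ->
      mcomp v f = mcomp f' u -> mcomp w g = mcomp g' v ->
      mcomp (shm D u) h = mcomp h' w ->
      dist D f g h -> dist D f' g' h';
  dist_id : forall X Z, is_zero_obj Z ->
      dist D (idm X) (0 : mor X Z) (0 : mor Z (sh D X));
  dist_ext : forall X Y (f : mor X Y),
      exists Z (g : mor Y Z) (h : mor Z (sh D X)), dist D f g h;
  dist_rot : forall X Y Z (f : mor X Y) (g : mor Y Z) (h : mor Z (sh D X)),
      dist D f g h <-> dist D g h (- shm D f);
  dist_morph : forall X Y Z X' Y' Z' (f : mor X Y) (g : mor Y Z) (h : mor Z (sh D X))
      (f' : mor X' Y') (g' : mor Y' Z') (h' : mor Z' (sh D X'))
      (u : mor X X') (v : mor Y Y'),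
      dist D f g h -> dist D f' g' h' -> mcomp v f = mcomp f' u ->
      exists w : mor Z Z', mcomp w g = mcomp g' v /\ mcomp (shm D u) h = mcomp h' w;
  dist_oct : forall X Y Z Z' X' Y' (f : mor X Y) (g : mor Y Z)
      (i : mor Y Z') (i' : mor Z' (sh D X))
      (j : mor Z X') (j' : mor X' (sh D Y))
      (k : mor Z Y') (k' : mor Y' (sh D X)),
      dist D f i i' -> dist D g j j' -> dist D (mcomp g f) k k' ->
      exists (r : mor Z' Y') (s : mor Y' X'),
        [/\ dist D r s (mcomp (shm D i) j'),
            mcomp r i = mcomp k g, mcomp k' r = i',
            mcomp s k = j & mcomp j' s = mcomp (shm D f) k']
}.

Section Cotorsion.
Variables (C : PreAdd) (D : TriData C).

Definition Ext1_zero (P Q : obj C -> Prop) : Prop :=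
  forall X Y, P X -> Q Y -> forall f : mor X (sh D Y), f = 0.

Definition shift_class (Q : obj C -> Prop) (X : obj C) : Prop :=
  exists Y, Q Y /\ isomorphic (sh D Y) X.

Definition star (P Q : obj C -> Prop) (X : obj C) : Prop :=
  exists M N (f : mor M X) (g : mor X N) (h : mor N (sh D M)),
    [/\ P M, Q N & dist D f g h].

Definition cotorsion_pair (P Q : obj C -> Prop) : Prop :=
  Ext1_zero P Q /\ forall X, star P (shift_class Q) X.

Definition twin_cotorsion_pair (S T U V : obj C -> Prop) : Prop :=
  [/\ cotorsion_pair S T, cotorsion_pair U V & Ext1_zero S V].

Definition Wcore (T U : obj C -> Prop) (X : obj C) : Prop := T X /\ U X.

Definition Cplus (T U V : obj C -> Prop) : obj C -> Prop :=
  star (Wcore T U) (shift_class V).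

End Cotorsion.

(** [tau] (on objects) with unit [eta] is a left adjoint of the inclusion of
    the ideal quotient [Cp / W] into [C / W], expressed by universal arrows:
    for every X, [eta X : X -> tau X] is universal (in the quotient by W)
    among morphisms from X into objects of [Cp]. *)
Definition left_adjoint_incl (C : PreAdd) (W Cp : obj C -> Prop)
    (tau : obj C -> obj C) (eta : forall X : obj C, mor X (tau X)) : Prop :=
  forall X, Cp (tau X) /\
    forall Y, Cp Y ->
      (forall g : mor X Y, exists f : mor (tau X) Y, quot_eq W (mcomp f (eta X)) g) /\
      (forall f1 f2 : mor (tau X) Y,
          quot_eq W (mcomp f1 (eta X)) (mcomp f2 (eta X)) -> quot_eq W f1 f2).
Arguments left_adjoint_incl {C} W Cp tau eta.

From Pilot Require Import Defs.
From mathcomp Require Import all_boot all_algebra.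
Local Open Scope ring_scope.
Set Implicit Arguments. Unset Strict Implicit. Unset Printing Implicit Defensive.
Import GRing.Theory.

(* Write W = T ∩ U.  The octahedral axiom applied to S[-1] -> U -> C gives a
   triangle T -> Z_C -> V[1] -> T[1]; here T lies in U because
   Hom(T, V[1]) = 0 by Ext^1(U,V) = Ext^1(S,V) = 0, so Z_C lies in C^+.
   Since Ext^1(S,T) = Ext^1(U,V) = 0, the morphism a∘b is killed by every
   morphism from C into C^+, so z_C is a weak universal arrow from C into C^+,
   hence also a unit of the adjunction modulo W: τ^+(C) = 0 in the quotient
   iff z_C factors through W iff Z_C lies in W.  Finally C lies in U iff
   Hom(C, V[1]) = 0; this vanishing holds when Z_C lies in U, and it splits
   the triangle T -> Z_C -> V[1], making Z_C a summand of T, when C lies in U. *)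

Section PreAdditive.
Variable C : PreAdd.

Lemma comp0m (X Y Z : obj C) (f : mor X Y) : mcomp (0 : mor Y Z) f = 0.
Proof.
have H := compDl (0 : mor Y Z) 0 f; rewrite addr0 in H.
by apply/eqP; rewrite -(addrI _ (etrans (addr0 _) H)).
Qed.

Lemma compm0 (X Y Z : obj C) (g : mor Y Z) : mcomp g (0 : mor X Y) = 0.
Proof.
have H := compDr g (0 : mor X Y) 0; rewrite addr0 in H.
by apply/eqP; rewrite -(addrI _ (etrans (addr0 _) H)).
Qed.

Lemma compNl (X Y Z : obj C) (g : mor Y Z) (f : mor X Y) :
  mcomp (- g) f = - mcomp g f.
Proof.
have H := compDl g (- g) f; rewrite subrr comp0m in H.
by apply/eqP; rewrite -addr_eq0 addrC -H.
Qed.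

Lemma compNr (X Y Z : obj C) (g : mor Y Z) (f : mor X Y) :
  mcomp g (- f) = - mcomp g f.
Proof.
have H := compDr g f (- f); rewrite subrr compm0 in H.
by apply/eqP; rewrite -addr_eq0 addrC -H.
Qed.

Lemma compBl (X Y Z : obj C) (g1 g2 : mor Y Z) (f : mor X Y) :
  mcomp (g1 - g2) f = mcomp g1 f - mcomp g2 f.
Proof. by rewrite compDl compNl. Qed.

Lemma compBr (X Y Z : obj C) (g : mor Y Z) (f1 f2 : mor X Y) :
  mcomp g (f1 - f2) = mcomp g f1 - mcomp g f2.
Proof. by rewrite compDr compNr. Qed.

Lemma isomorphic_hom_eq0 (X M N : obj C) (g : mor X N) :
  isomorphic M N -> (forall f : mor X M, f = 0) -> g = 0.
Proof.
case=> p [q [_ Hpq]] H.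
by rewrite -(mcomp1m g) -Hpq -Defs.compA (H (mcomp q g)) compm0.
Qed.

Section FactorsThrough.
Variable W : obj C -> Prop.

Lemma factors_through_compl (X Y Z : obj C) (g : mor Y Z) (f : mor X Y) :
  factors_through W f -> factors_through W (mcomp g f).
Proof.
case=> M [WM [u [v ->]]]; exists M; split=> //.
by exists u, (mcomp g v); rewrite Defs.compA.
Qed.

Lemma factors_through_compr (X Y Z : obj C) (g : mor Y Z) (f : mor X Y) :
  factors_through W g -> factors_through W (mcomp g f).
Proof.
case=> M [WM [u [v ->]]]; exists M; split=> //.
by exists (mcomp u f), v; rewrite Defs.compA.
Qed.

Lemma factors_throughN (X Y : obj C) (f : mor X Y) :
  factors_through W f -> factors_through W (- f).
Proof. by move=> Hf; rewrite -(mcomp1m f) -compNl; apply: factors_through_compl. Qed.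

Hypothesis HC : additive_cat C.
Hypothesis W_biproduct :
  forall X Y B (i1 : mor X B) (i2 : mor Y B) (p1 : mor B X) (p2 : mor B Y),
    is_biproduct i1 i2 p1 p2 -> W X -> W Y -> W B.

Lemma factors_throughD (X Y : obj C) (f1 f2 : mor X Y) :
  factors_through W f1 -> factors_through W f2 -> factors_through W (f1 + f2).
Proof.
case=> M1 [W1 [u1 [v1 ->]]]; case=> M2 [W2 [u2 [v2 ->]]].
case: HC => _ /(_ M1 M2) [P [i1 [i2 [p1 [p2 Hb]]]]].
exists P; split; first exact: W_biproduct Hb W1 W2.
exists (mcomp i1 u1 + mcomp i2 u2), (mcomp v1 p1 + mcomp v2 p2).
case: Hb => E1 E2 E3 E4 _.
rewrite compDl !compDr -!Defs.compA !(Defs.compA p1) !(Defs.compA p2) E1 E2 E3 E4.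
by rewrite !comp0m !compm0 addr0 add0r !mcomp1m.
Qed.

Lemma factors_throughB (X Y : obj C) (f1 f2 : mor X Y) :
  factors_through W f1 -> factors_through W f2 -> factors_through W (f1 - f2).
Proof. by move=> H1 /factors_throughN; apply: factors_throughD. Qed.

End FactorsThrough.

Lemma Wcore_biproduct (T U : obj C -> Prop) (HT : subcat T) (HU : subcat U)
    X Y B (i1 : mor X B) (i2 : mor Y B) (p1 : mor B X) (p2 : mor B Y) :
  is_biproduct i1 i2 p1 p2 -> Wcore T U X -> Wcore T U Y -> Wcore T U B.
Proof.
move=> Hb [TX UX] [TY UY]; case: HT => _ _ HT _; case: HU => _ _ HU _.
by split; [exact: HT Hb TX TY | exact: HU Hb UX UY].
Qed.

End PreAdditive.

Section Triangulated.
Variables (C : PreAdd) (D : TriData C).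
Hypotheses (HC : additive_cat C) (HD : triangulated D).

Lemma shm0 (X Y : obj C) : shm D (0 : mor X Y) = 0.
Proof.
have H := shm_add HD (0 : mor X Y) 0; rewrite addr0 in H.
by apply/eqP; rewrite -(addrI _ (etrans (addr0 _) H)).
Qed.

Lemma shm_inj (X Y : obj C) (f g : mor X Y) : shm D f = shm D g -> f = g.
Proof. by case: (shm_bij HD X Y) => h hK _ E; rewrite -(hK f) E hK. Qed.

Lemma shm_surj (X Y : obj C) (w : mor (sh D X) (sh D Y)) : exists f, w = shm D f.
Proof. by case: (shm_bij HD X Y) => h _ Kh; exists (h w); rewrite Kh. Qed.

Lemma shm_eq0 (X Y : obj C) (f : mor X Y) : shm D f = 0 -> f = 0.
Proof. by rewrite -(shm0 X Y); apply: shm_inj. Qed.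

Lemma zero_obj_sh (Z : obj C) : is_zero_obj Z -> is_zero_obj (sh D Z).
Proof. by rewrite /is_zero_obj => HZ; rewrite -(shm_id HD) HZ shm0. Qed.

Lemma dist_comp0 (X Y Z : obj C) (f : mor X Y) (g : mor Y Z) (h : mor Z (sh D X)) :
  dist D f g h -> mcomp g f = 0.
Proof.
move=> Hf; case: HC => [[Z0 HZ0] _].
have [w [Hw _]] := dist_morph HD (dist_id HD X HZ0) Hf (erefl (mcomp f (idm X))).
by rewrite -Hw compm0.
Qed.

Lemma dist_weak_coker (X Y Z : obj C) (f : mor X Y) (g : mor Y Z) (h : mor Z (sh D X)) :
  dist D f g h -> forall W (k : mor Y W), mcomp k f = 0 -> exists k', k = mcomp k' g.
Proof.
move=> Hf W k Hk; case: HC => [[Z0 HZ0] _].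
have H1 : dist D (0 : mor Z0 W) (idm W) (0 : mor W (sh D Z0)).
  by apply/(dist_rot HD); rewrite shm0 oppr0; apply: (dist_id HD); apply: zero_obj_sh.
have [w [Hw _]] := dist_morph HD (u := 0) Hf H1 (etrans Hk (esym (compm0 _ _))).
by exists w; rewrite Hw mcomp1m.
Qed.

Lemma dist_weak_ker (X Y Z : obj C) (f : mor X Y) (g : mor Y Z) (h : mor Z (sh D X)) :
  dist D f g h -> forall W (k : mor W Y), mcomp g k = 0 -> exists k', k = mcomp f k'.
Proof.
move=> Hf W k Hk; case: HC => [[Z0 HZ0] _].
have /(dist_rot HD) H0 := dist_id HD W HZ0.
move/(dist_rot HD): Hf => Hf.
have [w [_ Hw]] := dist_morph HD (u := k) (v := 0) H0 Hf (etrans (comp0m _ _) (esym Hk)).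
have [k' Hk'] := shm_surj w.
exists k'; apply: shm_inj.
rewrite Hk' shm_id // compNr mcompm1 compNl -shm_comp // in Hw.
exact: oppr_inj.
Qed.

(* The retraction [v] splits the triangle on [u], exhibiting [X] as a
   biproduct summand of [M]. *)
Lemma retract_subcat (P : obj C -> Prop) (HP : subcat P) (X M : obj C)
    (u : mor X M) (v : mor M X) :
  mcomp v u = idm X -> P M -> P X.
Proof.
move=> Hvu PM; have [N [g [h Hu]]] := dist_ext HD u.
have Hh : h = 0.
  have /(dist_rot HD)/(dist_rot HD)/dist_comp0 := Hu.
  rewrite compNl => /eqP; rewrite oppr_eq0 => /eqP E.
  by rewrite -(mcomp1m h) -(shm_id HD) -Hvu (shm_comp HD) -Defs.compA E compm0.
have [s Hs] := dist_weak_ker (proj1 (dist_rot HD _ _ _) Hu) (k := idm N)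
  (etrans (mcompm1 _) Hh).
have Hgu := dist_comp0 Hu.
set m := idm M - mcomp s g.
have Hgm : mcomp g m = 0 by rewrite /m compBr mcompm1 Defs.compA -Hs mcomp1m subrr.
have [m' Hm'] := dist_weak_ker Hu Hgm.
case: HP => _ _ _ /(_ X N M u s (mcomp v m) g); apply => //; split.
- by rewrite /m -Defs.compA compBl mcomp1m -Defs.compA Hgu compm0 subr0.
- by rewrite -Hs.
- exact: Hgu.
- by rewrite -Defs.compA /m compBl mcomp1m -Defs.compA -Hs mcompm1 subrr compm0.
- by rewrite Defs.compA Hm' -(Defs.compA u) (Defs.compA v) Hvu mcomp1m -Hm' /m subrK.
Qed.

Lemma Wcore_retract (T U : obj C -> Prop) (HT : subcat T) (HU : subcat U)
    (X M : obj C) (u : mor X M) (v : mor M X) :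
  mcomp v u = idm X -> Wcore T U M -> Wcore T U X.
Proof.
move=> Hvu [TM UM].
by split; [apply: (retract_subcat HT Hvu) | apply: (retract_subcat HU Hvu)].
Qed.

Lemma Ext1_zero_shift_class (P Q : obj C -> Prop) X N (f : mor X N) :
  Ext1_zero D P Q -> P X -> shift_class D Q N -> f = 0.
Proof.
by move=> HPQ PX [Y [QY Hiso]]; apply: (isomorphic_hom_eq0 _ Hiso) => g; apply: HPQ.
Qed.

Lemma cotorsion_left_of_Ext1_zero (U V : obj C -> Prop) (HU : subcat U)
    (Hcot : cotorsion_pair D U V) (Y : obj C) :
  (forall V1, V V1 -> forall f : mor Y (sh D V1), f = 0) -> U Y.
Proof.
move=> Hext; case: Hcot => _ /(_ Y) [M [N [f [g [h [UM [V1 [HV1 Hiso]] Hd]]]]]].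
have Hg : g = 0 by apply: (isomorphic_hom_eq0 _ Hiso); apply: Hext.
have [k Hk] := dist_weak_ker Hd (k := idm Y) (etrans (mcompm1 _) Hg).
by apply: (retract_subcat HU (esym Hk)).
Qed.

End Triangulated.

Section TwinCotorsionPair.
Variables (C : PreAdd) (D : TriData C).
Hypotheses (HC : additive_cat C) (HD : triangulated D).
Variables S T U V : obj C -> Prop.
Hypotheses (HT : subcat T) (HU : subcat U).
Hypotheses (ExtST : Ext1_zero D S T) (HUV : cotorsion_pair D U V)
  (ExtSV : Ext1_zero D S V).

Local Notation W := (Wcore T U).
Local Notation Cp := (Cplus D T U V).

Variables (tau : obj C -> obj C) (eta : forall Y : obj C, mor Y (tau Y)).
Hypothesis Htau : left_adjoint_incl W Cp tau eta.

Variables (X U0 V0 S' T' Z : obj C).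
Variables (v : mor V0 U0) (a : mor U0 X) (c : mor X (sh D V0)).
Hypotheses (HU0 : U U0) (HV0 : V V0) (Ha : dist D v a c).
Variables (t : mor T' S') (b : mor S' U0) (d : mor U0 (sh D T')).
Hypotheses (HS' : S (sh D S')) (HT' : T (sh D T')) (Hb : dist D t b d).
Variables (z : mor X Z) (e : mor Z (sh D S')).
Hypothesis Hz : dist D (mcomp a b) z e.

Let ExtUV : Ext1_zero D U V := proj1 HUV.

Lemma comp_b_eq0 Y (h : mor U0 Y) : T Y -> mcomp h b = 0.
Proof. by move=> TY; apply: (shm_eq0 HD); apply: ExtST. Qed.

Lemma comp_ab_eq0 Y (g : mor X Y) : Cp Y -> mcomp g (mcomp a b) = 0.
Proof.
case=> [M [N [i [j [k [[TM _] HN Hd]]]]]].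
have Hj : mcomp j (mcomp g a) = 0 := Ext1_zero_shift_class _ ExtUV HU0 HN.
have [h Hh] := dist_weak_ker HC HD Hd Hj.
by rewrite Defs.compA Hh -Defs.compA comp_b_eq0 ?compm0.
Qed.

Lemma Cplus_factors_through_z Y (g : mor X Y) : Cp Y -> exists f, g = mcomp f z.
Proof. by move=> CpY; apply: (dist_weak_coker HC HD Hz); apply: comp_ab_eq0. Qed.

Lemma U_shT' : U (sh D T').
Proof.
apply: (cotorsion_left_of_Ext1_zero HC HD HU HUV) => V1 HV1 f.
have Hfd : mcomp f d = 0 by apply: ExtUV.
have /(dist_rot HD)/(dist_rot HD) Hd := Hb.
have [f' ->] := dist_weak_coker HC HD Hd Hfd.
by rewrite (ExtSV HS' HV1 f') comp0m.
Qed.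

Lemma dist_shT'_Z_shV0 : exists (r : mor (sh D T') Z) (s : mor Z (sh D V0)),
  dist D r s (mcomp (shm D d) (- shm D v)) /\ mcomp s z = c.
Proof.
have /(dist_rot HD) Hb' := Hb.
have /(dist_rot HD) Ha' := Ha.
have [r [s [Hrs _ _ Hsz _]]] := dist_oct HD Hb' Ha' Hz.
by exists r, s.
Qed.

Lemma Cplus_Z : Cp Z.
Proof.
have [r [s [Hrs _]]] := dist_shT'_Z_shV0.
exists (sh D T'), (sh D V0), r, s, (mcomp (shm D d) (- shm D v)); split=> //.
  by split; [exact: HT' | exact: U_shT'].
by exists V0; split=> //; exists (idm _), (idm _); rewrite mcomp1m.
Qed.

Lemma Wcore_Z_of_z_factors : factors_through W z -> W Z.
Proof.
case=> M [WM [p [q Hqp]]].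
have Hpab : mcomp p (mcomp a b) = 0 by rewrite Defs.compA comp_b_eq0 //; case: WM.
have [p' Hp'] := dist_weak_coker HC HD Hz Hpab.
have /(dist_rot HD) Hz' := Hz.
(* [idm Z - q p'] is killed by [z], so it factors through [e], and then, by
   Ext^1(S,V) = 0, through the W-part [i] of [Z] ∈ C^+. *)
have H0 : mcomp (idm Z - mcomp q p') z = 0.
  by rewrite compBl mcomp1m -Defs.compA -Hp' -Hqp subrr.
have [r0 Hr0] := dist_weak_coker HC HD Hz' H0.
case: Cplus_Z => [M1 [N [i [j [k [WM1 HN Hd]]]]]].
have Hj : mcomp j r0 = 0 := Ext1_zero_shift_class _ ExtSV HS' HN.
have [r' Hr'] := dist_weak_ker HC HD Hd Hj.
have Hid : factors_through W (idm Z).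
  have -> : idm Z = mcomp q p' + mcomp i (mcomp r' e).
    by rewrite Defs.compA -Hr' -Hr0 addrC subrK.
  apply: (factors_throughD HC (Wcore_biproduct HT HU)).
  - by exists M; split=> //; exists p', q.
  - by exists M1; split=> //; exists (mcomp r' e), i.
case: Hid => M2 [WM2 [u2 [v2 /esym Hv2]]].
by apply: (Wcore_retract HC HD HT HU Hv2).
Qed.

Lemma z_factors_of_tau_eq0 : quot_eq W (idm (tau X)) 0 -> factors_through W z.
Proof.
move=> Htau0; have [_ Huniv] := Htau X.
have [psi Hpsi] := (Huniv Z Cplus_Z).1 z.
have Heta : factors_through W (eta X).
  by rewrite -(mcomp1m (eta X)) -(subr0 (idm _)); apply: factors_through_compr.
have -> : z = mcomp psi (eta X) - (mcomp psi (eta X) - z) by rewrite opprB addrC subrK.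
apply: (factors_throughB HC (Wcore_biproduct HT HU)) Hpsi.
exact: factors_through_compl.
Qed.

Lemma tau_eq0_of_Wcore_Z : W Z -> quot_eq W (idm (tau X)) 0.
Proof.
move=> WZ; have [Cptau Huniv] := Htau X.
apply: (Huniv _ Cptau).2; rewrite /quot_eq mcomp1m comp0m subr0.
have [phi ->] := Cplus_factors_through_z (eta X) Cptau.
by exists Z; split=> //; exists z, phi.
Qed.

Lemma U_of_U_Z : U Z -> U X.
Proof.
move=> UZ; apply: (cotorsion_left_of_Ext1_zero HC HD HU HUV) => V1 HV1 f.
have Hfab : mcomp f (mcomp a b) = 0.
  by rewrite Defs.compA (ExtUV HU0 HV1 (mcomp f a)) comp0m.
have [h ->] := dist_weak_coker HC HD Hz Hfab.
by rewrite (ExtUV UZ HV1 h) comp0m.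
Qed.

(* If [X] ∈ U then [c] = 0, so [s] = 0 and the triangle T'[1] -> Z -> V0[1]
   splits. *)
Lemma Wcore_Z_of_U : U X -> W Z.
Proof.
move=> UX; have [r [s [Hrs Hsz]]] := dist_shT'_Z_shV0.
have Hc : c = 0 := ExtUV UX HV0 c.
have /(dist_rot HD) Hz' := Hz.
have [s' Hs'] := dist_weak_coker HC HD Hz' (etrans Hsz Hc).
have Hs : s = 0 by rewrite Hs' (ExtSV HS' HV0 s') comp0m.
have [k Hk] := dist_weak_ker HC HD Hrs (k := idm Z) (etrans (mcompm1 _) Hs).
by apply: (Wcore_retract HC HD HT HU (esym Hk)); split; [exact: HT' | exact: U_shT'].
Qed.

Lemma tau_eq0_Wcore_U_equiv :
  (quot_eq W (idm (tau X)) 0 <-> W Z) /\ (W Z <-> U X).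
Proof.
split; split.
- by move/z_factors_of_tau_eq0; apply: Wcore_Z_of_z_factors.
- exact: tau_eq0_of_Wcore_Z.
- by case=> _; apply: U_of_U_Z.
- exact: Wcore_Z_of_U.
Qed.

End TwinCotorsionPair.

Unset Implicit Arguments.
Theorem lemma3p9 (C : PreAdd) (D : TriData C)
    (HC : additive_cat C) (HD : triangulated D)
    (S T U V : obj C -> Prop)
    (HS : subcat S) (HT : subcat T) (HU : subcat U) (HV : subcat V)
    (Htwin : twin_cotorsion_pair D S T U V)
    (tau : obj C -> obj C) (eta : forall X : obj C, mor X (tau X))
    (Htau : left_adjoint_incl (Wcore T U) (Cplus D T U V) tau eta)
    (X U0 V0 S' T' Z : obj C)
    (v : mor V0 U0) (a : mor U0 X) (c : mor X (sh D V0))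
    (HU0 : U U0) (HV0 : V V0) (Ha : dist D v a c)
    (t : mor T' S') (b : mor S' U0) (d : mor U0 (sh D T'))
    (HS' : S (sh D S')) (HT' : T (sh D T')) (Hb : dist D t b d)
    (z : mor X Z) (e : mor Z (sh D S'))
    (Hz : dist D (mcomp a b) z e) :
  (quot_eq (Wcore T U) (idm (tau X)) 0 <-> Wcore T U Z) /\
  (Wcore T U Z <-> U X).
Proof.
case: Htwin => [[ExtST _] HUV ExtSV].
exact: (tau_eq0_Wcore_U_equiv HC HD HT HU ExtST HUV ExtSV Htau HU0 HV0 Ha HS' HT' Hb Hz).
Qed.
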